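(* Let $T$ be a tree of order $n$ with $\mathrm{diss}(T)=\frac{2n}{3}$. Then for every vertex $u$ of $T$, there is a maximum dissociation set of $T$ (i.e., a dissociation set of cardinality $\mathrm{diss}(T)$) not containing $u$.
   Context: A set $D$ of vertices of a graph $G$ is a dissociation set if the induced subgraph $G[D]$ has maximum degree at most $1$; $\mathrm{diss}(G)$ is the maximum cardinality of a dissociation set of $G$. *)

From mathcomp Require Import all_boot.
Set Implicit Arguments. Unset Strict Implicit. Unset Printing Implicit Defensive.

Definition simple_graph (T : finType) (e : rel T) : Prop :=
  symmetric e /\ irreflexive e.

Definition nedges (T : finType) (e : rel T) : nat :=
  #|[set p : T * T | e p.1 p.2]| %/ 2.

Definition is_tree (T : finType) (e : rel T) : Prop :=
  [/\ simple_graph e, 0 < #|T|,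
      (forall x y : T, connect e x y) & nedges e = #|T| - 1].

Definition dissociation (T : finType) (e : rel T) (D : {set T}) : bool :=
  [forall x in D, #|[set y in D | e x y]| <= 1].

Definition diss (T : finType) (e : rel T) : nat :=
  \max_(D : {set T} | dissociation e D) #|D|.

From mathcomp Require Import all_boot zify.
Set Implicit Arguments. Unset Strict Implicit. Unset Printing Implicit Defensive.

(* Every forest F has a dissociation set of size at least 2|F|/3: a nonempty
   forest always contains an isolated vertex, a vertex with two pendant
   leaves, or a leaf whose neighbour has degree at most 2, and each such
   configuration yields a set R of vertices together with a dissociation set
   A of R, with 3|A| >= 2|R| and no edge from A to F - R, so one recurses on
   F - R.  Applied to the forest T - u this gives a dissociation set avoiding
   u of size at least (2n - 2)/3 = diss(T) - 2/3, hence a maximum one. *)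

Section Forests.
Variables (T : finType) (e : rel T).
Hypothesis e_sym : symmetric e.
Hypothesis e_irr : irreflexive e.

Definition nbrs (S : {set T}) (x : T) : {set T} := [set y in S | e x y].
Definition deg (S : {set T}) (x : T) : nat := #|nbrs S x|.
Definition arcs (S : {set T}) : {set T * T} :=
  [set p | [&& p.1 \in S, p.2 \in S & e p.1 p.2]].

Lemma card_arcs (S : {set T}) : #|arcs S| = \sum_(x in S) deg S x.
Proof.
rewrite /arcs -sum1dep_card.
rewrite -(pair_big_dep (fun x => x \in S) (fun x y => (y \in S) && e x y) (fun _ _ => 1)) /=.
by apply: eq_bigr => x _; rewrite sum1dep_card; apply: eq_card => y; rewrite !inE.
Qed.

Section DistanceToSet.
Hypothesis e_connected : forall x y : T, connect e x y.
Variables (S : {set T}) (s0 : T).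
Hypothesis s0_in_S : s0 \in S.

Definition reaches_in (x : T) (n : nat) : bool :=
  [exists p : n.-tuple T, path e x p && (last x p \in S)].

Lemma reaches_in_ex (x : T) : exists n, reaches_in x n.
Proof.
have /connectP [p e_p last_p] := e_connected x s0.
by exists (size p); apply/existsP; exists (in_tuple p); rewrite /= e_p -last_p.
Qed.

Definition dist (x : T) : nat := ex_minn (reaches_in_ex x).

Lemma exists_closer_nbr (x : T) : x \notin S -> exists y, e x y && (dist y < dist x).
Proof.
move=> xNS; rewrite /dist; case: ex_minnP => m /existsP [p /andP [e_p lastS]] _.
case: p e_p lastS => [[|y p] size_p] /=; first by move=> _ xS; rewrite xS in xNS.
case/andP=> exy e_p lastS; exists y; rewrite exy /=.
case: ex_minnP => k _ min_k; rewrite -(eqP size_p) ltnS min_k //.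
by apply/existsP; exists (in_tuple p); rewrite /= e_p lastS.
Qed.

Definition step_to (x : T) : T := odflt x [pick y | e x y && (dist y < dist x)].

Lemma step_toP (x : T) : x \notin S -> e x (step_to x) && (dist (step_to x) < dist x).
Proof.
move=> xNS; rewrite /step_to; case: pickP => [y //|none].
by have [y] := exists_closer_nbr xNS; rewrite none.
Qed.

End DistanceToSet.

(* Each vertex outside S contributes the two arcs between itself and its step
   towards S; these are distinct, as dist strictly decreases along a step. *)
Lemma tree_sum_deg_lt : is_tree e ->
  forall S : {set T}, S != set0 -> \sum_(x in S) deg S x < 2 * #|S|.
Proof.
case=> _ _ conn; rewrite /nedges; set edges := [set p : T * T | _].
move=> n_edges S /set0Pn [s0 s0S]; rewrite -card_arcs.
pose f := step_to conn s0S.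
have f_edge x : x \notin S -> e x (f x) && (dist conn s0S (f x) < dist conn s0S x).
  exact: step_toP.
set out := [set (x, f x) | x in ~: S]; set inw := [set (f x, x) | x in ~: S].
have card_out : #|out| = #|~: S| by apply: card_imset => x y [].
have card_inw : #|inw| = #|~: S| by apply: card_imset => x y [].
have out_inw0 : out :&: inw = set0.
  apply/setP => -[a b]; rewrite !inE; apply/negP.
  case/andP=> /imsetP [x xNS [-> ->]] /imsetP [y yNS [x_fy fx_y]].
  rewrite inE in xNS; rewrite inE in yNS.
  case/andP: (f_edge x xNS) => _; case/andP: (f_edge y yNS) => _.
  by rewrite -x_fy fx_y => /ltn_trans lt /lt; rewrite ltnn.
have arcs_new0 : arcs S :&: (out :|: inw) = set0.
  apply/setP => -[a b]; rewrite !inE /=; apply/negP.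
  by case/andP=> /and3P [aS bS _] /orP [] /imsetP [x]; rewrite inE => xNS [ea eb];
    [rewrite -ea aS in xNS | rewrite -eb bS in xNS].
have sub_edges : arcs S :|: (out :|: inw) \subset edges.
  apply/subsetP => -[a b]; rewrite !inE /=.
  case/orP=> [/and3P [] // | /orP [] /imsetP [x xNS [-> ->]]]; rewrite inE in xNS;
    by case/andP: (f_edge x xNS); rewrite // e_sym.
have arcs_le : #|arcs S| + 2 * #|~: S| <= #|edges|.
  have := cardsUI out inw; rewrite out_inw0 cards0 addn0 card_out card_inw addnn -mul2n => <-.
  have := cardsUI (arcs S) (out :|: inw); rewrite arcs_new0 cards0 addn0 => <-.
  exact: subset_leq_card.
have : 0 < #|S| by apply/card_gt0P; exists s0.
move: (cardsC S) arcs_le n_edges; lia.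
Qed.

Lemma dissociation_small (A : {set T}) : #|A| <= 2 -> dissociation e A.
Proof.
move=> card_A; apply/forall_inP => x xA.
have sub : [set y in A | e x y] \subset A :\ x.
  apply/subsetP => y; rewrite !inE => /andP [-> exy]; rewrite andbT.
  by apply: contraTneq exy => ->; rewrite e_irr.
by move: (subset_leq_card sub) (cardsD1 x A); rewrite xA; lia.
Qed.

Lemma dissociationU (D A : {set T}) :
  (forall x y, x \in D -> y \in A -> ~~ e x y) ->
  dissociation e D -> dissociation e A -> dissociation e (D :|: A).
Proof.
move=> no_edge /forall_inP dD /forall_inP dA; apply/forall_inP => x.
rewrite inE => /orP [xD | xA].
- rewrite (_ : [set y in D :|: A | e x y] = [set y in D | e x y]) ?dD //.
  apply/setP => y; rewrite !inE andb_orl orbC.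
  by case: (boolP (y \in A)) => //= yA; rewrite (negbTE (no_edge x y xD yA)).
- rewrite (_ : [set y in D :|: A | e x y] = [set y in A | e x y]) ?dA //.
  apply/setP => y; rewrite !inE andb_orl.
  by case: (boolP (y \in D)) => //= yD; rewrite e_sym (negbTE (no_edge y x yD xA)).
Qed.

Lemma deg1_nbr_uniq (S : {set T}) (v p y : T) : deg S v = 1 ->
  p \in S -> e v p -> y \in S -> e v y -> y = p.
Proof.
move=> /eqP /cards1P [z nbrs_v] pS evp yS evy.
have : p \in nbrs S v by rewrite inE pS.
have : y \in nbrs S v by rewrite inE yS.
by rewrite nbrs_v !inE => /eqP -> /eqP ->.
Qed.

(* One reduction step: R is deleted from S and A joins the dissociation set. *)
Record piece (S R A : {set T}) : Prop := Piece {
  piece_subS : R \subset S;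
  piece_neq0 : R != set0;
  piece_subR : A \subset R;
  piece_dissociation : dissociation e A;
  piece_card : 2 * #|R| <= 3 * #|A|;
  piece_closed : forall a y, a \in A -> y \in S -> e a y -> y \in R
}.

Definition pendants (S : {set T}) (p : T) : {set T} :=
  [set v in nbrs S p | deg S v == 1].

Lemma isolated_piece (S : {set T}) (x : T) :
  x \in S -> deg S x = 0 -> piece S [set x] [set x].
Proof.
move=> xS deg0; split=> //.
- by rewrite sub1set.
- by apply/set0Pn; exists x; rewrite inE.
- by apply: dissociation_small; rewrite cards1.
- by rewrite cards1.
move=> a y; rewrite inE => /eqP -> yS exy.
by move/cards0_eq/setP/(_ y): deg0; rewrite !inE yS exy.
Qed.

Lemma star_piece (S : {set T}) (p : T) :
  p \in S -> 2 <= #|pendants S p| -> piece S (p |: pendants S p) (pendants S p).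
Proof.
move=> pS card_pend.
have leaf_uniq a y : a \in pendants S p -> y \in S -> e a y -> y = p.
  rewrite !inE => /andP [/andP [_ epa] /eqP deg_a] yS eay.
  by apply: deg1_nbr_uniq deg_a pS _ yS eay; rewrite e_sym.
split.
- by apply/subsetP => y; rewrite !inE => /orP [/eqP -> // | /andP [/andP []]].
- by apply/set0Pn; exists p; rewrite !inE eqxx.
- by apply/subsetP => y y_pend; rewrite inE y_pend orbT.
- apply/forall_inP => a a_pend.
  suff -> : [set y in pendants S p | e a y] = set0 by rewrite cards0.
  apply/setP => y; rewrite in_set0 in_set; apply/negP => /andP [y_pend eay].
  have yS : y \in S by move: y_pend; rewrite !inE => /andP [/andP []].
  by move: y_pend; rewrite (leaf_uniq a y a_pend yS eay) !inE e_irr andbF.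
- by rewrite cardsU1 !inE e_irr andbF /=; lia.
by move=> a y a_pend yS eay; rewrite (leaf_uniq a y) ?setU11.
Qed.

Lemma pendant_path_piece (S : {set T}) (v p : T) :
  v \in S -> deg S v = 1 -> p \in nbrs S v -> deg S p <= 2 ->
  piece S (p |: nbrs S p) [set v; p].
Proof.
move=> vS deg_v; rewrite inE => /andP [pS evp] deg_p.
have vp : v != p by apply: contraTneq evp => ->; rewrite e_irr.
split.
- by apply/subsetP => y; rewrite !inE => /orP [/eqP -> // | /andP []].
- by apply/set0Pn; exists p; rewrite !inE eqxx.
- by apply/subsetP => y; rewrite !inE => /orP [] /eqP ->; rewrite ?eqxx // vS e_sym evp orbT.
- by apply: dissociation_small; rewrite cards2 vp.
- have card_R : #|p |: nbrs S p| <= 3 by rewrite cardsU1 (leq_add (leq_b1 _) deg_p).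
  by rewrite cards2 vp; move: card_R; lia.
move=> a y; rewrite !inE => /orP [] /eqP -> yS eay.
  by rewrite (deg1_nbr_uniq deg_v pS evp yS eay) eqxx.
by rewrite yS eay orbT.
Qed.

Definition leaves (S : {set T}) : {set T} := [set v in S | deg S v == 1].

Lemma nbrs_setD (S L : {set T}) (x : T) : nbrs (S :\: L) x = nbrs S x :\: L.
Proof. by apply/setP => y; rewrite !inE andbA. Qed.

(* Removing all leaves of a forest without the three configurations above
   leaves a nonempty subforest of minimum degree 2. *)
Section Core.
Variable S : {set T}.
Hypothesis no_isolated : {in S, forall x, 0 < deg S x}.
Hypothesis few_pendants : {in S, forall p, #|pendants S p| <= 1}.
Hypothesis leaf_nbr_deg : forall v p, v \in leaves S -> p \in nbrs S v -> 2 < deg S p.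

Lemma core_deg_ge2 : {in S :\: leaves S, forall x, 2 <= deg (S :\: leaves S) x}.
Proof.
move=> x; rewrite !inE => /andP [not_leaf xS].
rewrite xS /= in not_leaf.
have deg_x : 2 <= deg S x by move: (no_isolated xS) not_leaf; case: (deg S x) => [|[|]].
rewrite /deg nbrs_setD; move: (cardsID (leaves S) (nbrs S x)).
have -> : nbrs S x :&: leaves S = pendants S x.
  by apply/setP => y; rewrite !inE; case: (y \in S); rewrite //= andbC.
case: (set_0Vmem (pendants S x)) => [-> | [v v_pend]].
  by rewrite cards0 /=; rewrite /deg in deg_x; lia.
have : 2 < deg S x.
  move: v_pend; rewrite !inE => /andP [/andP [vS exv] deg_v].
  by apply: (leaf_nbr_deg (v := v)); rewrite !inE ?vS ?xS // e_sym.
move: (few_pendants xS); rewrite /deg; lia.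
Qed.

Lemma core_neq0 : S != set0 -> S :\: leaves S != set0.
Proof.
case/set0Pn => s sS; case: (boolP (s \in leaves S)) => [s_leaf | s_core]; last first.
  by apply/set0Pn; exists s; rewrite inE s_core.
move: (s_leaf); rewrite inE sS => /cards1P [p nbrs_s].
have p_nbr : p \in nbrs S s by rewrite nbrs_s inE.
apply/set0Pn; exists p; move: (p_nbr) (leaf_nbr_deg s_leaf p_nbr).
by rewrite !inE => /andP [-> _] deg_p /=; rewrite andbT (gtn_eqF (ltnW deg_p)).
Qed.

End Core.

Hypothesis forest : forall S : {set T}, S != set0 -> \sum_(x in S) deg S x < 2 * #|S|.

Lemma exists_piece (S : {set T}) : S != set0 -> exists R A, piece S R A.
Proof.
move=> S_neq0.
case: (boolP [exists x in S, deg S x == 0]) => [/exists_inP [x xS /eqP deg0] | no_iso].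
  by exists [set x], [set x]; apply: isolated_piece.
case: (boolP [exists p in S, 2 <= #|pendants S p|]) => [/exists_inP [p pS pend2] | no_star].
  by exists (p |: pendants S p), (pendants S p); apply: star_piece.
case: (boolP [exists v in leaves S, [exists p in nbrs S v, deg S p <= 2]])
  => [/exists_inP [v v_leaf /exists_inP [p p_nbr deg_p]] | no_path].
  exists (p |: nbrs S p), [set v; p]; move: v_leaf; rewrite inE => /andP [vS /eqP deg_v].
  exact: pendant_path_piece.
exfalso.
have no_iso' : {in S, forall x, 0 < deg S x}.
  move=> x xS; rewrite lt0n; apply: contraNneq no_iso => deg0.
  by apply/exists_inP; exists x; rewrite ?deg0.
have no_star' : {in S, forall p, #|pendants S p| <= 1}.
  by move=> p pS; rewrite leqNgt; apply: contra no_star => pend2; apply/exists_inP; exists p.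
have no_path' v p : v \in leaves S -> p \in nbrs S v -> 2 < deg S p.
  move=> v_leaf p_nbr; rewrite ltnNge; apply: contra no_path => deg_p.
  by apply/exists_inP; exists v => //; apply/exists_inP; exists p.
have := forest (core_neq0 no_path' S_neq0).
rewrite ltnNge mulnC -sum_nat_const => /negP; apply.
exact: leq_sum (core_deg_ge2 no_iso' no_star' no_path').
Qed.

Lemma dissociation_two_thirds (S : {set T}) :
  exists D : {set T}, [/\ D \subset S, dissociation e D & 2 * #|S| <= 3 * #|D|].
Proof.
elim: {S}_.+1 {-2}S (ltnSn #|S|) => // n IH S card_S.
have [-> | S_neq0] := eqVneq S set0.
  by exists set0; rewrite sub0set cards0 dissociation_small ?cards0.
have [R [A [RS R_neq0 AR dA card_RA closed]]] := exists_piece S_neq0.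
have card_SR : #|S :\: R| = #|S| - #|R| by rewrite cardsDS.
have R_gt0 : 0 < #|R| by rewrite card_gt0.
have [|D [DS dD card_D]] := IH (S :\: R).
  by move: (subset_leq_card RS); rewrite card_SR; lia.
have no_edge x y : x \in D -> y \in A -> ~~ e x y.
  move=> xD yA; have /setDP [xS xNR] := subsetP DS x xD.
  by apply: contraNN xNR => exy; apply: (closed y); rewrite // e_sym.
have DA0 : D :&: A = set0.
  apply/setP => x; rewrite !inE; apply/negbTE/negP => /andP [xD xA].
  have /setDP [_ xNR] := subsetP DS x xD.
  by rewrite (subsetP AR x xA) in xNR.
exists (D :|: A); split.
- by rewrite subUset (subset_trans DS) ?subsetDl // (subset_trans AR).
- exact: dissociationU.
by move: card_D card_RA (cardsUI D A) (subset_leq_card RS); rewrite DA0 cards0 card_SR; lia.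
Qed.

End Forests.

Theorem lemma2 (T : finType) (e : rel T) :
  is_tree e -> 3 * diss e = 2 * #|T| ->
  forall u : T, exists D : {set T},
    [/\ dissociation e D, #|D| = diss e & u \notin D].
Proof.
move=> tree diss_T u; have [[e_sym e_irr] _ _ _] := tree.
have [D [D_sub dD card_D]] :=
  dissociation_two_thirds e_sym e_irr (tree_sum_deg_lt e_sym tree) [set~ u].
have D_le : #|D| <= diss e by apply: (leq_bigmax_cond (P := dissociation e)).
exists D; split=> //; last by apply/negP => /(subsetP D_sub); rewrite !inE eqxx.
by move: card_D; rewrite cardsC1; lia.
Qed.
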